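(* Let $Q:\mathbb{R}^n\to\mathcal{Z}$ be a quantizer, $\mathbf{S}\in\mathbb{R}^{n\times m}$, $z\in\mathcal{Z}$, $\mathbf{x}_0,\mathbf{x}_1\in\mathbb{R}^m$, $\boldsymbol{\Psi}_0,\boldsymbol{\Psi}_1\in\mathcal{P}_n$ and $\alpha\in[0,1]$. Set $\mathcal{A}_i:=\mathcal{W}(z,\mathbf{x}_i,\boldsymbol{\Psi}_i)$ for $i\in\{0,1\}$, $\mathbf{x}_\alpha=\alpha\mathbf{x}_1+(1-\alpha)\mathbf{x}_0$, $\boldsymbol{\Psi}_\alpha=\alpha\boldsymbol{\Psi}_1+(1-\alpha)\boldsymbol{\Psi}_0$, and $\mathcal{A}_\alpha:=\{\alpha\mathbf{w}_1+(1-\alpha)\mathbf{w}_0:\mathbf{w}_1\in\mathcal{A}_1,\mathbf{w}_0\in\mathcal{A}_0\}$. Suppose one of the following holds: (a) $Q^{-1}(z)$ is convex and $\boldsymbol{\Psi}_1=\boldsymbol{\Psi}_0$; (b) $Q^{-1}(z)$ is convex and $\boldsymbol{\Psi}_i=\psi_i\mathbf{I}_n$ with $\psi_i>0$ for $i\in\{0,1\}$; (c) $\boldsymbol{\Psi}_0,\boldsymbol{\Psi}_1$ are diagonal with positive diagonal entries and $Q^{-1}(z)=\prod_{j=1}^n[a_j,b_j]$ for some $a_j\le b_j$ in $\mathbb{R}\cup\{-\infty,+\infty\}$ (each factor understood as the corresponding closed interval of $\mathbb{R}$). Then $\mathcal{A}_\alpha\subseteq\mathcal{W}(z,\mathbf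{x}_\alpha,\boldsymbol{\Psi}_\alpha)$.
   Context: $\mathcal{P}_n$ denotes the set of $n\times n$ real symmetric positive-definite matrices; $\mathbf{I}_n$ is the identity. A quantizer is any map $Q:\mathbb{R}^n\to\mathcal{Z}$ with $\mathcal{Z}$ countable. For $z\in\mathcal{Z}$, $\mathbf{x}\in\mathbb{R}^m$, $\boldsymbol{\Psi}\in\mathcal{P}_n$, define $\mathcal{W}(z,\mathbf{x},\boldsymbol{\Psi}):=\{\mathbf{w}\in\mathbb{R}^n:\boldsymbol{\Psi}^{-1}(\mathbf{S}\mathbf{x}+\mathbf{w})\in Q^{-1}(z)\}=\{\boldsymbol{\Psi}\mathbf{y}-\mathbf{S}\mathbf{x}:\mathbf{y}\in Q^{-1}(z)\}$. *)

From mathcomp Require Import all_boot all_order all_algebra.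
From mathcomp Require Import reals constructive_ereal.
Set Implicit Arguments. Unset Strict Implicit. Unset Printing Implicit Defensive.
Import Order.TTheory GRing.Theory Num.Theory.
Local Open Scope ring_scope.

Definition posdef (R : realType) (n : nat) (Psi : 'M[R]_n) : Prop :=
  Psi^T = Psi /\ forall v : 'cV[R]_n, v != 0 -> 0 < (v^T *m Psi *m v) 0 0.

Definition qpreim (R : realType) (n : nat) (Z : countType)
  (Q : 'cV[R]_n -> Z) (z : Z) : 'cV[R]_n -> Prop := fun y => Q y = z.

Definition Wset (R : realType) (n m : nat) (Z : countType)
  (Q : 'cV[R]_n -> Z) (S : 'M[R]_(n, m)) (z : Z) (x : 'cV[R]_m) (Psi : 'M[R]_n)
  : 'cV[R]_n -> Prop :=
  fun w => qpreim Q z (invmx Psi *m (S *m x + w)).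

Definition convex_set (R : realType) (n : nat) (C : 'cV[R]_n -> Prop) : Prop :=
  forall (y1 y0 : 'cV[R]_n) (t : R), C y1 -> C y0 -> 0 <= t <= 1 ->
    C (t *: y1 + (1 - t) *: y0).

Definition comb_set (R : realType) (n : nat) (alpha : R)
  (A1 A0 : 'cV[R]_n -> Prop) : 'cV[R]_n -> Prop :=
  fun w => exists w1 w0, A1 w1 /\ A0 w0 /\ w = alpha *: w1 + (1 - alpha) *: w0.

Definition pos_diag (R : realType) (n : nat) (Psi : 'M[R]_n) : Prop :=
  is_diag_mx Psi /\ forall i, 0 < Psi i i.

Definition is_box (R : realType) (n : nat) (C : 'cV[R]_n -> Prop) : Prop :=
  exists a b : 'I_n -> \bar R, (forall j, (a j <= b j)%E) /\
    forall y : 'cV[R]_n, C y <-> (forall j, (a j <= (y j 0)%:E <= b j)%E).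

From mathcomp Require Import all_boot all_order all_algebra.
From mathcomp Require Import reals constructive_ereal.
From mathcomp Require Import ring lra.
Import Order.TTheory GRing.Theory Num.Theory.
Local Open Scope ring_scope.

(* Writing y_i := Psi_i^-1 (S x_i + w_i), which lies in C := Q^-1(z), the
   point to place in C is Psi_alpha^-1 (alpha Psi_1 y_1 + (1 - alpha) Psi_0 y_0),
   independently of S, x_i and w_i.  In cases (a) and (b) this point is a
   convex combination of y_1 and y_0, with weight alpha in (a) and
   alpha psi_1 / (alpha psi_1 + (1 - alpha) psi_0) in (b); in case (c) the same
   holds coordinatewise with the weights read off the diagonals, and a box
   is convex coordinate by coordinate. *)

Section MixWeight.
Context {R : realFieldType}.
Implicit Types alpha p q : R.

Lemma mix_gt0 {alpha p q} : 0 <= alpha <= 1 -> 0 < p -> 0 < q ->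
  0 < alpha * p + (1 - alpha) * q.
Proof. by move=> /andP[? ?] ? ?; nra. Qed.

Definition mix_weight alpha p q : R :=
  alpha * p / (alpha * p + (1 - alpha) * q).

Lemma mix_weight_itv {alpha p q} : 0 <= alpha <= 1 -> 0 < p -> 0 < q ->
  0 <= mix_weight alpha p q <= 1.
Proof.
move=> ha hp hq; have hc := mix_gt0 ha hp hq; case/andP: ha => ? ?.
by rewrite /mix_weight ler_pdivrMr // mul1r divr_ge0 /=; nra.
Qed.

Lemma mix_weightM {alpha p q} : 0 <= alpha <= 1 -> 0 < p -> 0 < q ->
  (alpha * p + (1 - alpha) * q) * mix_weight alpha p q = alpha * p /\
  (alpha * p + (1 - alpha) * q) * (1 - mix_weight alpha p q) = (1 - alpha) * q.
Proof.
move=> ha hp hq; have /lt0r_neq0 hc := mix_gt0 ha hp hq.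
by rewrite /mix_weight; split; field.
Qed.

Lemma mix_weight_scale {V : lmodType R} {alpha p q} (u v : V) :
  0 <= alpha <= 1 -> 0 < p -> 0 < q ->
  (alpha * p + (1 - alpha) * q) *:
      (mix_weight alpha p q *: u + (1 - mix_weight alpha p q) *: v)
    = (alpha * p) *: u + ((1 - alpha) * q) *: v.
Proof.
move=> ha hp hq; have [e1 e0] := mix_weightM ha hp hq.
by rewrite scalerDr !scalerA e1 e0.
Qed.

End MixWeight.

Lemma convex_ereal_itv (R : realDomainType) (a b : \bar R) (s u v : R) :
  0 <= s <= 1 -> (a <= u%:E <= b)%E -> (a <= v%:E <= b)%E ->
  (a <= (s * u + (1 - s) * v)%:E <= b)%E.
Proof.
move=> /andP[s0 s1] /andP[au ub] /andP[av vb].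
have [lo [hi [alo hib /andP[lo_le le_hi]]]] : exists lo hi,
    [/\ (a <= lo%:E)%E, (hi%:E <= b)%E & lo <= s * u + (1 - s) * v <= hi].
  by case: (lerP u v) => huv; [exists u, v | exists v, u];
    split => //; apply/andP; split; nra.
by apply/andP; split; [apply: le_trans alo _ | apply: le_trans hib]; rewrite lee_fin.
Qed.

Lemma posdef_unitmx (R : realType) (n : nat) (P : 'M[R]_n) :
  posdef P -> P \in unitmx.
Proof.
move=> [_ hP]; rewrite -row_free_unit -kermx_eq0; apply: contraT.
move=> /rowV0Pn[u /sub_kermxP uP0 u0].
have := hP u^T; rewrite trmx_eq0 trmxK => /(_ u0).
by rewrite uP0 mul0mx mxE ltxx.
Qed.

Lemma posdef_mix (R : realType) (n : nat) (P1 P0 : 'M[R]_n) (alpha : R) :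
  posdef P1 -> posdef P0 -> 0 <= alpha <= 1 ->
  posdef (alpha *: P1 + (1 - alpha) *: P0).
Proof.
move=> [sym1 h1] [sym0 h0] ha; split; first by rewrite linearD !linearZ /= sym1 sym0.
move=> v v0; have := mix_gt0 ha (h1 v v0) (h0 v v0).
rewrite mulmxDr mulmxDl -!scalemxAr -!scalemxAl.
by set q1 := v^T *m P1 *m v; set q0 := v^T *m P0 *m v; rewrite !mxE.
Qed.

Lemma diag_mulmx_col {R : pzSemiRingType} {n : nat} (D : 'M[R]_n) (t : 'cV[R]_n) i :
  is_diag_mx D -> (D *m t) i 0 = D i i * t i 0.
Proof.
move=> /is_diag_mxP hD; rewrite mxE (bigD1 i) //= big1 ?addr0 // => j ji.
by rewrite hD ?mul0r // eq_sym.
Qed.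

Definition mix_closed {R : realType} {n : nat} (C : 'cV[R]_n -> Prop)
    (alpha : R) (P1 P0 : 'M[R]_n) : Prop :=
  forall y1 y0, C y1 -> C y0 -> exists2 t, C t &
    (alpha *: P1 + (1 - alpha) *: P0) *m t
      = alpha *: (P1 *m y1) + (1 - alpha) *: (P0 *m y0).

Section MixClosed.
Variables (R : realType) (n : nat) (C : 'cV[R]_n -> Prop) (alpha : R).
Hypothesis alpha01 : 0 <= alpha <= 1.

Lemma mix_closed_same (P : 'M[R]_n) : convex_set C -> mix_closed C alpha P P.
Proof.
move=> convC y1 y0 Cy1 Cy0; exists (alpha *: y1 + (1 - alpha) *: y0).
  exact: convC.
by rewrite -scalerDl addrC subrK scale1r mulmxDr !scalemxAr.
Qed.

Lemma mix_closed_scalar (p1 p0 : R) : convex_set C -> 0 < p1 -> 0 < p0 ->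
  mix_closed C alpha p1%:M p0%:M.
Proof.
move=> convC hp1 hp0 y1 y0 Cy1 Cy0.
pose s := mix_weight alpha p1 p0.
exists (s *: y1 + (1 - s) *: y0); first exact/convC/mix_weight_itv.
rewrite !scale_scalar_mx -raddfD /= !mul_scalar_mx.
by rewrite (mix_weight_scale _ _ alpha01) // !scalerA.
Qed.

Lemma mix_closed_box (P1 P0 : 'M[R]_n) : is_box C -> pos_diag P1 -> pos_diag P0 ->
  mix_closed C alpha P1 P0.
Proof.
move=> [a [b [_ boxC]]] [diag1 pos1] [diag0 pos0] y1 y0 /boxC Cy1 /boxC Cy0.
pose s j := mix_weight alpha (P1 j j) (P0 j j).
exists (\col_j (s j * y1 j 0 + (1 - s j) * y0 j 0)).
  apply/boxC => j; rewrite mxE.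
  exact: convex_ereal_itv (mix_weight_itv alpha01 (pos1 j) (pos0 j)) (Cy1 j) (Cy0 j).
have diagD : is_diag_mx (alpha *: P1 + (1 - alpha) *: P0).
  apply/is_diag_mxP => i j ij; rewrite !mxE.
  by rewrite (is_diag_mxP diag1) ?(is_diag_mxP diag0) // !mulr0 addr0.
apply/matrixP => j k; rewrite (ord1 k) diag_mulmx_col //.
move: (diag_mulmx_col P1 y1 j diag1) (diag_mulmx_col P0 y0 j diag0).
rewrite !mxE => -> ->.
have [e1 e0] := mix_weightM alpha01 (pos1 j) (pos0 j).
by rewrite /s mulrDr (mulrA _ (mix_weight _ _ _)) e1 (mulrA _ (1 - _)) e0 !mulrA.
Qed.

End MixClosed.

Lemma Wset_comb_sub (R : realType) (n m : nat) (Z : countType)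
    (Q : 'cV[R]_n -> Z) (S : 'M[R]_(n, m)) (z : Z) (x0 x1 : 'cV[R]_m)
    (P0 P1 : 'M[R]_n) (alpha : R) :
  P1 \in unitmx -> P0 \in unitmx -> alpha *: P1 + (1 - alpha) *: P0 \in unitmx ->
  mix_closed (qpreim Q z) alpha P1 P0 ->
  forall w, comb_set alpha (Wset Q S z x1 P1) (Wset Q S z x0 P0) w ->
    Wset Q S z (alpha *: x1 + (1 - alpha) *: x0) (alpha *: P1 + (1 - alpha) *: P0) w.
Proof.
move=> unit1 unit0 unitA mixC w [w1 [w0 [Ww1 [Ww0 ->]]]].
have [t Ct Et] := mixC _ _ Ww1 Ww0.
rewrite !mulKVmx // in Et; rewrite /Wset /qpreim -Ct; congr Q.
by rewrite [S *m _]mulmxDr -!scalemxAr addrACA -2!scalerDr -Et mulKmx.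
Qed.

Theorem lemma3 (R : realType) (n m : nat) (Z : countType)
  (Q : 'cV[R]_n -> Z) (S : 'M[R]_(n, m)) (z : Z) (x0 x1 : 'cV[R]_m)
  (Psi0 Psi1 : 'M[R]_n) (alpha : R) :
  posdef Psi0 -> posdef Psi1 -> 0 <= alpha <= 1 ->
  [\/ convex_set (qpreim Q z) /\ Psi1 = Psi0,
      convex_set (qpreim Q z) /\
        (exists psi0 psi1 : R, 0 < psi0 /\ 0 < psi1 /\
           Psi0 = psi0%:M /\ Psi1 = psi1%:M)
    | pos_diag Psi0 /\ pos_diag Psi1 /\ is_box (qpreim Q z)] ->
  forall w : 'cV[R]_n,
    comb_set alpha (Wset Q S z x1 Psi1) (Wset Q S z x0 Psi0) w ->
    Wset Q S z (alpha *: x1 + (1 - alpha) *: x0)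
               (alpha *: Psi1 + (1 - alpha) *: Psi0) w.
Proof.
move=> pd0 pd1 alpha01 cases; apply: Wset_comb_sub.
- exact: posdef_unitmx.
- exact: posdef_unitmx.
- exact/posdef_unitmx/posdef_mix.
case: cases => [[convC ->] | [convC [p0 [p1 [p0_gt0 [p1_gt0 [-> ->]]]]]]
              | [pdiag0 [pdiag1 boxC]]].
- exact: mix_closed_same.
- exact: mix_closed_scalar.
- exact: mix_closed_box.
Qed.
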